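(* Let $\Omega$ and $\Omega'$ be two causal orders on the same finite set of events $E$, let $\underline{I}=(I_\omega)_{\omega\in E}$ be a family of non-empty finite sets, and let $\Theta=\mathrm{Hist}(\Omega,\underline{I})$, $\Theta'=\mathrm{Hist}(\Omega',\underline{I})$. Then the meet $\Theta\wedge\Theta'$ is tight if and only if for every $\omega\in E$ we have $\downarrow_\Omega\omega\subseteq\downarrow_{\Omega'}\omega$ or $\downarrow_{\Omega'}\omega\subseteq\downarrow_\Omega\omega$.
   Context: A causal order $\Omega$ on $E$ is a preorder (reflexive transitive relation) $\le_\Omega$ on $E$; $\downarrow_\Omega\omega=\{\xi\in E:\xi\le_\Omega\omega\}$. Partial functions on $\underline{I}$ are functions $f$ with $\mathrm{dom}(f)\subseteq E$ and $f(\omega)\in I_\omega$, ordered by restriction ($f\le g$ iff $\mathrm{dom}(f)\subseteq\mathrm{dom}(g)$ and $g|_{\mathrm{dom}(f)}=f$). $\mathrm{Hist}(\Omega,\underline{I})=\bigcup_{\xi\in E}\prod_{\omega\in\downarrow_\Omega\xi}I_\omega$ (all partial functions whose domain is $\downarrow_\Omega\xi$ for some $\xi$). Partial functions are compatible if they agree on common domain; a compatible set $\mathcal F$ has join $\bigvee\mathcal F$ (union of the functions). For a set $\Theta$ of partial functions, $\mathrm{Ext}(\Theta)=\{\bigvee\mathcal F:\emptyset\ne\mathcal F\subseteq\Theta\text{ compatible}\}$; for a set $W$, $\mathrm{Prime}(W)=\{w\in W:\text{for all compatible }\mathcal F\subseteq W,\ w=\bigvee\mathcal F\Rightarrow w\in\mathcal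 F\}$. The meet is $\Theta\wedge\Theta'=\mathrm{Prime}(\mathrm{Ext}(\Theta)\cup\mathrm{Ext}(\Theta'))$. For a space $\Theta$ and $h\in\mathrm{Ext}(\Theta)$, $\mathrm{tips}_\Theta(h)=\mathrm{dom}(h)\setminus\bigcup\{\mathrm{dom}(k):k\in\mathrm{Ext}(\Theta),k<h\}$. A space $\Theta$ is tight if for every $k\in\mathrm{Ext}(\Theta)$ and every $\omega\in\mathrm{dom}(k)$ there is a unique $h\in\Theta$ with $h\le k$ and $\omega\in\mathrm{tips}_\Theta(h)$. *)

From mathcomp Require Import all_boot.
Unset Printing Implicit Defensive.

Section PF.
Variables (E : finType) (I : E -> finType).

Definition pfun := forall w : E, option (I w).

Definition dom (f : pfun) (w : E) : Prop := f w <> None.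

(* restriction order: f <= g iff dom f ⊆ dom g and g agrees with f on dom f *)
Definition pf_le (f g : pfun) : Prop := forall w, dom f w -> g w = f w.
Definition pf_lt (f g : pfun) : Prop := pf_le f g /\ f <> g.

Definition pfset := pfun -> Prop.

Definition compatible (F : pfset) : Prop :=
  forall f g, F f -> F g -> forall w, dom f w -> dom g w -> f w = g w.

Definition is_join (F : pfset) (h : pfun) : Prop :=
  forall w, (h w = None <-> (forall f, F f -> f w = None)) /\
            (forall f, F f -> dom f w -> h w = f w).

Definition Ext (Th : pfset) : pfset := fun h =>
  exists F : pfset, (exists f, F f) /\ (forall f, F f -> Th f) /\
                    compatible F /\ is_join F h.

Definition Prime (W : pfset) : pfset := fun w =>
  W w /\ forall F : pfset, (forall f, F f -> W f) -> compatible F ->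
                           is_join F w -> F w.

Definition meet (Th Th' : pfset) : pfset :=
  Prime (fun h => Ext Th h \/ Ext Th' h).

Definition tips (Th : pfset) (h : pfun) (w : E) : Prop :=
  dom h w /\ ~ (exists k, Ext Th k /\ pf_lt k h /\ dom k w).

Definition tight (Th : pfset) : Prop :=
  forall k, Ext Th k -> forall w, dom k w ->
    exists! h, Th h /\ pf_le h k /\ tips Th h w.

Definition causal_order (le : E -> E -> Prop) : Prop :=
  (forall x, le x x) /\ (forall x y z, le x y -> le y z -> le x z).

Definition down (le : E -> E -> Prop) (w : E) : E -> Prop := fun x => le x w.

Definition Hist (le : E -> E -> Prop) : pfset := fun f =>
  exists xi : E, forall w, dom f w <-> down le xi w.

End PF.
Arguments Hist {E} I le _.
Arguments meet {E I} Th Th' _.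
Arguments tight {E I} Th.
Arguments down {E} le w _.
Arguments causal_order {E} le.

From mathcomp Require Import all_boot.
From Stdlib Require Import Classical ClassicalEpsilon FunctionalExtensionality.
From Stdlib Require Import PropExtensionality.

(* Every element of Ext of the meet that is defined at w lies above a history
   of one of the two orders defined at w, so its domain contains the down-set
   of w for le or for le'.  If the two down-sets of w are comparable, their
   intersection is itself a down-set of one of the orders, and the restriction
   of k to it is the unique prime below k with tip w: any other candidate would
   lie strictly above it, so w would not be one of its tips.  If they are
   incomparable, the histories on the two down-sets are both primes of the meet
   with tip w below their join, which contradicts uniqueness. *)

Section PartialFunctions.
Set Implicit Arguments.
Unset Strict Implicit.

Variables (E : finType) (I : E -> finType).

Local Notation pfun := (pfun E I).
Local Notation pfset := (pfset E I).
Local Notation dom := (dom E I).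
Local Notation pf_le := (pf_le E I).
Local Notation is_join := (is_join E I).
Local Notation Ext := (Ext E I).
Local Notation Prime := (Prime E I).
Local Notation tips := (tips E I).

Lemma pf_le_dom (f g : pfun) x : pf_le f g -> dom f x -> dom g x.
Proof. by move=> fg fx; rewrite /dom fg. Qed.

Lemma pf_le_eq (f g : pfun) : pf_le f g -> (forall x, dom g x -> dom f x) -> f = g.
Proof.
move=> fg gf; apply: functional_extensionality_dep => x.
have [fx | /NNPP fx] := classic (dom f x); first by rewrite fg.
by rewrite fx; apply: NNPP => gx; apply/gf: fx => /esym.
Qed.

Lemma pf_le_under (h h' k : pfun) :
  pf_le h k -> pf_le h' k -> (forall x, dom h x -> dom h' x) -> pf_le h h'.
Proof. by move=> hk h'k hh' x hx; rewrite -(h'k x (hh' x hx)) hk. Qed.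

Lemma is_join_dom (F : pfset) k w :
  is_join F k -> dom k w -> exists2 g, F g & pf_le g k /\ dom g w.
Proof.
move=> kF kw; apply: NNPP => noF; apply/kw/(kF w).1 => f Ff.
apply: NNPP => fw; apply: noF; exists f => //; split=> // x fx.
exact: (kF x).2.
Qed.

Lemma Ext_dom (Th : pfset) k w :
  Ext Th k -> dom k w -> exists2 g, Th g & pf_le g k /\ dom g w.
Proof.
move=> [F [_ [FTh [_ kF]]]] /(is_join_dom kF) [g Fg gk].
by exists g; first exact: FTh.
Qed.

Lemma Ext_cover (Th F : pfset) k :
  (exists f, F f) -> (forall f, F f -> Th f) -> (forall f, F f -> pf_le f k) ->
  (forall x, dom k x -> exists2 f, F f & dom f x) -> Ext Th k.
Proof.
move=> F0 FTh Fk kF; exists F; split=> //; split=> //; split.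
  by move=> f g Ff Fg x fx gx; rewrite -(Fk f Ff x fx) -(Fk g Fg x gx).
move=> x; split; last by move=> f Ff fx; rewrite (Fk f Ff x fx).
split=> [kx f Ff | Fx].
  by apply: NNPP => fx; apply: (fx); rewrite -(Fk f Ff x fx).
by apply: NNPP => kx; have [f Ff] := kF x kx; apply; exact: Fx.
Qed.

Lemma sub_Ext (Th : pfset) h : Th h -> Ext Th h.
Proof.
move=> Thh; apply: (Ext_cover (F := fun f => f = h)); first by exists h.
- by move=> f ->.
- by move=> f -> x.
- by move=> x hx; exists h.
Qed.

Lemma meetC (Th Th' : pfset) : meet Th Th' = meet Th' Th.
Proof.
rewrite /meet; congr (Prime _); apply: functional_extensionality => h.
by apply: propositional_extensionality; tauto.
Qed.

Definition unique_below (Th : pfset) (h : pfun) (w : E) : Prop :=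
  forall f, Th f -> pf_le f h -> dom f w -> f = h.

Lemma Prime_of_unique_below (W : pfset) h w :
  W h -> dom h w -> unique_below W h w -> Prime W h.
Proof.
move=> Wh hw hU; split=> // F FW _ hF.
by have [f Ff [fh fw]] := is_join_dom hF hw; rewrite -(hU f (FW f Ff) fh fw).
Qed.

Lemma tips_of_unique_below (Th : pfset) h w :
  dom h w -> unique_below (Ext Th) h w -> tips Th h w.
Proof. by move=> hw hU; split=> // -[k [kTh [[kh nkh] kw]]]; exact/nkh/hU. Qed.

Lemma tips_eq (Th : pfset) h h' w :
  Th h -> pf_le h h' -> dom h w -> tips Th h' w -> h = h'.
Proof.
move=> Thh hh' hw [_ tip]; apply: NNPP => nhh'; apply: tip.
by exists h; split; [exact: sub_Ext | split].
Qed.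

Definition restrict (k : pfun) (P : E -> Prop) : pfun :=
  fun x => if excluded_middle_informative (P x) then k x else None.

Lemma dom_restrict k P x : dom (restrict k P) x <-> P x /\ dom k x.
Proof.
by rewrite /dom /restrict; case: excluded_middle_informative => Px /=; tauto.
Qed.

Lemma restrict_le k P : pf_le (restrict k P) k.
Proof.
move=> x /dom_restrict [Px _]; rewrite /restrict.
by case: excluded_middle_informative.
Qed.

Lemma restrict_sub k P Q :
  (forall x, P x -> Q x) -> pf_le (restrict k P) (restrict k Q).
Proof.
move=> PQ x /dom_restrict [Px _]; rewrite /restrict.
case: excluded_middle_informative => [? | /(_ (PQ x Px))//] /=.
by case: excluded_middle_informative => // /(_ Px).
Qed.

Lemma Ext_Hist_down le g w x :
  causal_order le -> Ext (Hist I le) g -> dom g w -> le x w -> dom g x.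
Proof.
move=> [_ le_trans] gExt gw xw; have [f [xi fxi] [fg fw]] := Ext_dom gExt gw.
by apply: pf_le_dom fg _; apply/fxi; apply: le_trans xw _; apply/fxi.
Qed.

Section Meet.
Variables le le' : E -> E -> Prop.
Hypotheses (Hle : causal_order le) (Hle' : causal_order le').

Local Notation W := (fun h => Ext (Hist I le) h \/ Ext (Hist I le') h).
Local Notation meet_orders := (meet (Hist I le) (Hist I le')).

Lemma Ext_dom_down (Th : pfset) k w :
  (forall f, Th f -> W f) -> Ext Th k -> dom k w ->
  (forall x, le x w -> dom k x) \/ (forall x, le' x w -> dom k x).
Proof.
move=> ThW kExt kw; have [g /ThW gExt [gk gw]] := Ext_dom kExt kw.
by case: gExt => gExt; [left | right] => x xw; apply: pf_le_dom gk _;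
  [exact: Ext_Hist_down Hle gExt gw xw | exact: Ext_Hist_down Hle' gExt gw xw].
Qed.

Lemma meet_Hist_tip h w :
  (forall x, dom h x <-> le x w) -> ~ (forall x, le' x w -> le x w) ->
  meet_orders h /\ tips meet_orders h w.
Proof.
move=> hdom not_le'_le; have hw : dom h w by apply/hdom; exact: Hle.1.
have hU Th : (forall f, Th f -> W f) -> unique_below (Ext Th) h w.
  move=> ThW f fExt fh fw; apply: (pf_le_eq fh).
  have [le_f | le'_f] := Ext_dom_down ThW fExt fw; first by move=> x /hdom; exact: le_f.
  by case: not_le'_le => x /le'_f /(pf_le_dom fh) /hdom.
split; last by apply: tips_of_unique_below hw (hU _ _) => f [].
apply: Prime_of_unique_below hw _; first by left; apply: sub_Ext; exists w.
by move=> f Wf; apply: (hU W) => //; exact: sub_Ext.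
Qed.

Lemma tight_meet_Hist :
  (forall w, (forall x, le x w -> le' x w) \/ (forall x, le' x w -> le x w)) ->
  tight meet_orders.
Proof.
move=> cmp k kExt w kw.
have meetW f : meet_orders f -> W f by case.
pose P x := le x w /\ le' x w.
have dom_both Th f : (forall f, Th f -> W f) -> Ext Th f -> dom f w ->
    forall x, P x -> dom f x.
  by move=> ThW fExt fw x [lexw le'xw]; case: (Ext_dom_down ThW fExt fw); apply.
pose h := restrict k P.
have hdom x : dom h x <-> P x.
  rewrite dom_restrict; split=> [[]//|Px]; split=> //.
  exact: dom_both _ _ meetW kExt kw x Px.
have hw : dom h w by apply/hdom; split; [exact: Hle.1 | exact: Hle'.1].
have hk : pf_le h k by exact: restrict_le.
have hU Th : (forall f, Th f -> W f) -> unique_below (Ext Th) h w.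
  move=> ThW f fExt fh fw; apply: (pf_le_eq fh) => x /hdom.
  exact: dom_both ThW fExt fw x.
have Wh : W h.
  by case: (cmp w) => sub; [left | right]; apply: sub_Ext; exists w => x;
    rewrite hdom /P /down; have := sub x; tauto.
have meet_h : meet_orders h.
  by apply: Prime_of_unique_below Wh hw _ => f Wf; apply: (hU W) => //; exact: sub_Ext.
exists h; split.
  by split=> //; split; [exact: hk | exact: tips_of_unique_below hw (hU _ meetW)].
move=> h' [meet_h' [h'k tip']]; apply: (tips_eq meet_h _ hw tip').
apply: pf_le_under hk h'k _ => x /hdom.
exact: dom_both _ _ meetW (sub_Ext meet_h') tip'.1 x.
Qed.

End Meet.

Lemma not_tight_meet_Hist le le' w :
  causal_order le -> causal_order le' -> (forall w, I w) ->
  ~ (forall x, le x w -> le' x w) -> ~ (forall x, le' x w -> le x w) ->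
  ~ tight (meet (Hist I le) (Hist I le')).
Proof.
move=> Hle Hle' d not_le_le' not_le'_le tight_meet.
pose total : pfun := fun x => Some (d x).
have dom_total P x : dom (restrict total P) x <-> P x.
  by rewrite dom_restrict; split=> [[]|] //.
pose h := restrict total (fun x => le x w).
pose h' := restrict total (fun x => le' x w).
pose k := restrict total (fun x => le x w \/ le' x w).
have hdom x : dom h x <-> le x w := dom_total _ x.
have h'dom x : dom h' x <-> le' x w := dom_total _ x.
have kdom x : dom k x <-> le x w \/ le' x w := dom_total _ x.
have [meet_h tip_h] := meet_Hist_tip Hle Hle' hdom not_le'_le.
have [meet_h' tip_h'] := meet_Hist_tip Hle' Hle h'dom not_le_le'.
rewrite meetC in meet_h' tip_h'.
have hk : pf_le h k by apply: restrict_sub => x; left.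
have h'k : pf_le h' k by apply: restrict_sub => x; right.
have kExt : Ext (meet (Hist I le) (Hist I le')) k.
  apply: (Ext_cover (F := fun f => f = h \/ f = h')); first by exists h; left.
  - by move=> f [->|->].
  - by move=> f [->|->].
  by move=> x /kdom [xw | xw];
    [exists h; [left | exact/hdom] | exists h'; [right | exact/h'dom]].
have kw : dom k w by apply/kdom; left; exact: Hle.1.
have [h0 [_ h0U]] := tight_meet k kExt w kw.
have hh' : h = h' by rewrite -(h0U h) ?(h0U h').
by apply: not_le_le' => x /hdom; rewrite hh' => /h'dom.
Qed.

End PartialFunctions.

Theorem theorem3 (E : finType) (I : E -> finType)
    (le le' : E -> E -> Prop) :
  causal_order le -> causal_order le' ->
  (forall w : E, inhabited (I w)) ->
  tight (meet (Hist I le) (Hist I le')) <->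
  (forall w : E, (forall x, down le w x -> down le' w x) \/
                 (forall x, down le' w x -> down le w x)).
Proof.
move=> Hle Hle' inhI; split; last exact: tight_meet_Hist.
move=> tight_meet w; apply: NNPP => /not_or_and [not_le_le' not_le'_le].
pose d w := epsilon (inhI w) (fun _ => True).
exact: not_tight_meet_Hist Hle Hle' d not_le_le' not_le'_le tight_meet.
Qed.
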